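(* Assume $f$ satisfies (A1). Let $x_0\in X$, $\hat y\in Y$, and run Algorithm 1 with step size $\gamma_x=1/\lambda$ and a number of iterations $$T\ge\frac{300\lambda[\varphi(x_0)-\psi(\hat y)]}{\varepsilon^2},$$ where $\psi(y)=\min_{x\in X}f(x,y)$. Then its output $x^*$ satisfies $\|\nabla\hat\varphi_{2\lambda}(x^* )\|\le\varepsilon/6$, where $\hat\varphi(x)=f(x,\hat y)$. Moreover, $\|\nabla\varphi_{2\lambda}(x^* )\|\le\varepsilon$ provided $24\mu\mathsf D\le\varepsilon$.
   Context: Let $E_x,E_y$ be finite-dimensional Euclidean spaces with Euclidean norms $\|\cdot\|$. Let $X\subseteq E_x$, $Y\subseteq E_y$ be convex sets with nonempty interior, $Y$ compact, and $\mathsf D\ge\mathrm{diam}(Y)$. Let $f:X\times Y\to\mathbb R$ and $\varphi(x)=\max_{y\in Y}f(x,y)$. (A1): $\nabla_x f$ exists on $X\times Y$ and $\|\nabla_x f(x',y')-\nabla_x f(x,y)\|\le\lambda\|x'-x\|+\mu\|y'-y\|$ for all $x,x'\in X,y,y'\in Y$, with $\lambda>0,\mu\ge0$. For a $\lambda'$-weakly convex function $\phi:X\to\mathbb R$ (i.e. $\phi+\frac{\lambda'}2\|\cdot\|^2$ convex) and $\bar\lambda>\lambda'$, the Moreau envelope is $\phi_{\bar\lambda}(x)=\min_{u\in X}\{\phi(u)+\frac{\bar\lambda}{2}\|u-x\|^2\}$; $\Pi_X$ denotes Euclidean projection onto $X$. Algorithm 1 (input $x_0\in X$, $\hat y\in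 Y$, $\gamma_x>0$, $T\in\mathbb N$): set $x^*=x_0$, $\varepsilon^*=+\infty$. For $t=0,\dots,T-1$: set $\tilde x_{t+1}=x_t-\gamma_x\nabla_x f(x_t,\hat y)$, $x_{t+1}=\Pi_X[\tilde x_{t+1}]$, $\varepsilon_t^2=\|\nabla_x f(x_t,\hat y)\|^2-\frac1{\gamma_x^2}\|\tilde x_{t+1}-x_{t+1}\|^2$; if $\varepsilon_t<\varepsilon^*$, set $x^*=x_t$, $\varepsilon^*=\varepsilon_t$. Output $x^*$. *)

From HB Require Import structures.
From mathcomp Require Import all_boot all_order all_algebra.
From mathcomp Require Import all_classical all_reals all_analysis.
Set Implicit Arguments. Unset Strict Implicit. Unset Printing Implicit Defensive.
Import Order.TTheory GRing.Theory Num.Theory.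
Local Open Scope classical_set_scope.
Local Open Scope ring_scope.

Section Defs.
Variable R : realType.

Definition dotv (n : nat) (u v : 'rV[R]_n) : R := \sum_(i < n) u ord0 i * v ord0 i.
Definition enorm (n : nat) (u : 'rV[R]_n) : R := Num.sqrt (dotv u u).

Definition convex_in (n : nat) (A : set 'rV[R]_n) : Prop :=
  forall a b (t : R), A a -> A b -> 0 <= t -> t <= 1 -> A (t *: a + (1 - t) *: b).

Definition is_grad_within (n : nat) (A : set 'rV[R]_n) (phi : 'rV[R]_n -> R)
    (x g : 'rV[R]_n) : Prop :=
  forall eps : R, 0 < eps -> exists2 delta : R, 0 < delta &
    forall u, A u -> enorm (u - x) < delta ->
      `|phi u - phi x - dotv g (u - x)| <= eps * enorm (u - x).

Definition is_proj (n : nat) (A : set 'rV[R]_n) (p : 'rV[R]_n -> 'rV[R]_n) : Prop :=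
  forall z, A (p z) /\ forall u, A u -> enorm (z - p z) <= enorm (z - u).

Definition moreau (n : nat) (X : set 'rV[R]_n) (phi : 'rV[R]_n -> R) (lb : R)
    (x : 'rV[R]_n) : R :=
  inf [set phi u + lb / 2 * enorm (u - x) ^+ 2 | u in X].

(* phi(x) = max_{y in Y} f(x,y) (the max is assumed attained in the theorem) *)
Definition phimax (n m : nat) (f : 'rV[R]_n -> 'rV[R]_m -> R) (Y : set 'rV[R]_m)
    (x : 'rV[R]_n) : R := sup [set f x y | y in Y].

Definition psimin (n m : nat) (f : 'rV[R]_n -> 'rV[R]_m -> R) (X : set 'rV[R]_n)
    (y : 'rV[R]_m) : \bar R := ereal_inf [set (f x y)%:E | x in X].

(* Algorithm 1.  State after t iterations: (x_t, x_star, eps_star). *)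
Fixpoint alg1_state (n m : nat) (gx : 'rV[R]_n -> 'rV[R]_m -> 'rV[R]_n)
    (proj : 'rV[R]_n -> 'rV[R]_n) (x0 : 'rV[R]_n) (yh : 'rV[R]_m) (gam : R)
    (t : nat) : 'rV[R]_n * 'rV[R]_n * \bar R :=
  match t with
  | 0%N => (x0, x0, +oo%E)
  | t'.+1 =>
      let '(xt, xs, es) := alg1_state gx proj x0 yh gam t' in
      let g := gx xt yh in
      let xtil := xt - gam *: g in
      let xnext := proj xtil in
      let et := Num.sqrt (enorm g ^+ 2 - gam^-2 * enorm (xtil - xnext) ^+ 2) in
      if (et%:E < es)%E then (xnext, xt, et%:E) else (xnext, xs, es)
  end.

Definition alg1 (n m : nat) (gx : 'rV[R]_n -> 'rV[R]_m -> 'rV[R]_n)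
    (proj : 'rV[R]_n -> 'rV[R]_n) (x0 : 'rV[R]_n) (yh : 'rV[R]_m) (gam : R)
    (T : nat) : 'rV[R]_n :=
  (alg1_state gx proj x0 yh gam T).1.2.

End Defs.

From HB Require Import structures.
From mathcomp Require Import all_boot all_order all_algebra.
From mathcomp Require Import all_classical all_reals all_analysis.
From mathcomp Require Import ring lra.
Import Order.TTheory GRing.Theory Num.Theory.
Import numFieldNormedType.Exports.
Local Open Scope classical_set_scope.
Local Open Scope ring_scope.
Set Implicit Arguments. Unset Strict Implicit. Unset Printing Implicit Defensive.

(* Algorithm 1 is projected gradient descent on f(., yh) with step 1/lam; by the
   descent lemma every step decreases f(., yh) by at least eps_t^2 / (2 lam), so
   the iteration budget forces the selected eps_t below eps / sqrt 150.  Here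
   eps_t^2 is the maximum over u in X of 2 lam <g, x_t - u> - lam^2 |x_t - u|^2,
   and a bound r on it gives lam |x - xh| <= r for the proximal point xh of
   f(., yh) at x, by quadratic growth of the (strongly convex) proximal objective;
   the gradient of the Moreau envelope is 2 lam (x - xh).  For phi, its proximal
   point is within mu D / lam of xh: adding the two quadratic-growth inequalities
   bounds lam |xh - xt|^2 by an increment of f(., y* ) - f(., yh), y* a maximiser at
   xh, whose gradient has norm at most mu D.  Descent lemma, weak convexity and
   these increment bounds all come from a mean-value inequality along segments,
   proved by real induction from the (relative) Frechet gradients. *)

Section Euclid.
Variables (R : realType) (n : nat).
Implicit Types (u v w : 'rV[R]_n) (c : R).

Lemma dotvC u v : dotv u v = dotv v u.
Proof. by apply: eq_bigr => i _; rewrite mulrC. Qed.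

Lemma dotvDl u v w : dotv (u + v) w = dotv u w + dotv v w.
Proof. by rewrite /dotv -big_split; apply: eq_bigr => i _; rewrite mxE mulrDl. Qed.

Lemma dotvDr u v w : dotv w (u + v) = dotv w u + dotv w v.
Proof. by rewrite dotvC dotvDl !(dotvC w). Qed.

Lemma dotvZl c u v : dotv (c *: u) v = c * dotv u v.
Proof. by rewrite /dotv mulr_sumr; apply: eq_bigr => i _; rewrite mxE mulrA. Qed.

Lemma dotvZr c u v : dotv u (c *: v) = c * dotv u v.
Proof. by rewrite dotvC dotvZl dotvC. Qed.

Lemma dotvNl u v : dotv (- u) v = - dotv u v.
Proof. by rewrite -scaleN1r dotvZl mulN1r. Qed.

Lemma dotvNr u v : dotv u (- v) = - dotv u v.
Proof. by rewrite dotvC dotvNl dotvC. Qed.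

Lemma dotvBl u v w : dotv (u - v) w = dotv u w - dotv v w.
Proof. by rewrite dotvDl dotvNl. Qed.

Lemma dotvBr u v w : dotv w (u - v) = dotv w u - dotv w v.
Proof. by rewrite dotvDr dotvNr. Qed.

Lemma dotv0l v : dotv 0 v = 0.
Proof. by rewrite /dotv big1 // => i _; rewrite mxE mul0r. Qed.

Lemma dotv0r v : dotv v 0 = 0.
Proof. by rewrite dotvC dotv0l. Qed.

Lemma dotvv_ge0 u : 0 <= dotv u u.
Proof. by apply: sumr_ge0 => i _; rewrite -expr2 sqr_ge0. Qed.

Lemma enorm_ge0 u : 0 <= enorm u.
Proof. exact: sqrtr_ge0. Qed.

Lemma enorm_sqr u : enorm u ^+ 2 = dotv u u.
Proof. by rewrite sqr_sqrtr // dotvv_ge0. Qed.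

Lemma enorm0 : enorm (0 : 'rV[R]_n) = 0.
Proof. by rewrite /enorm dotv0l sqrtr0. Qed.

Lemma enorm_eq0 u : (enorm u == 0) = (u == 0).
Proof.
apply/idP/eqP => [|->]; last by rewrite enorm0.
rewrite sqrtr_eq0 le_eqVlt ltNge dotvv_ge0 orbF psumr_eq0 => [/allP uP|i _].
  apply/rowP => i; rewrite mxE.
  by move: (implyP (uP i (mem_index_enum _)) isT); rewrite mulf_eq0 orbb => /eqP.
by rewrite -expr2 sqr_ge0.
Qed.

Lemma enormN u : enorm (- u) = enorm u.
Proof. by rewrite /enorm dotvNl dotvNr opprK. Qed.

Lemma enorm_distC u v : enorm (u - v) = enorm (v - u).
Proof. by rewrite -enormN opprB. Qed.

Lemma enormZ c u : enorm (c *: u) = `|c| * enorm u.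
Proof.
by rewrite /enorm dotvZl dotvZr mulrA -expr2 sqrtrM ?sqr_ge0 // sqrtr_sqr.
Qed.

Lemma enorm_sqrD u v :
  enorm (u + v) ^+ 2 = enorm u ^+ 2 + 2 * dotv u v + enorm v ^+ 2.
Proof. by rewrite !enorm_sqr !dotvDl !dotvDr (dotvC v u); ring. Qed.

Lemma enorm_sqrB u v :
  enorm (u - v) ^+ 2 = enorm u ^+ 2 - 2 * dotv u v + enorm v ^+ 2.
Proof. by rewrite !enorm_sqr !dotvBl !dotvBr (dotvC v u); ring. Qed.

Lemma cauchy_schwarz u v : dotv u v <= enorm u * enorm v.
Proof.
have [->|u0] := eqVneq u 0; first by rewrite dotv0l enorm0 mul0r.
have [->|v0] := eqVneq v 0; first by rewrite dotv0r enorm0 mulr0.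
have nu : 0 < enorm u by rewrite lt_def enorm_eq0 u0 enorm_ge0.
have nv : 0 < enorm v by rewrite lt_def enorm_eq0 v0 enorm_ge0.
have := dotvv_ge0 (enorm v *: u - enorm u *: v).
rewrite !dotvBl !dotvBr !dotvZl !dotvZr -!enorm_sqr (dotvC v u) => H.
have : 0 <= enorm u * enorm v * (enorm u * enorm v - dotv u v) by nra.
by rewrite pmulr_rge0 ?mulr_gt0 // subr_ge0.
Qed.

Lemma cauchy_schwarz_norm u v : `|dotv u v| <= enorm u * enorm v.
Proof.
rewrite ler_norml cauchy_schwarz andbT.
by rewrite lerNl -dotvNl -(enormN u) cauchy_schwarz.
Qed.

Lemma ler_enormD u v : enorm (u + v) <= enorm u + enorm v.
Proof.
have := cauchy_schwarz u v; have := enorm_ge0 u; have := enorm_ge0 v.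
move=> nu nv cs; rewrite -ler_sqr ?nnegrE ?enorm_ge0 ?addr_ge0 //.
by rewrite enorm_sqrD; nra.
Qed.

Lemma enorm_convex_comb u v w c :
  c * enorm (u - w) ^+ 2 + (1 - c) * enorm (v - w) ^+ 2 =
  enorm (c *: u + (1 - c) *: v - w) ^+ 2 + c * (1 - c) * enorm (u - v) ^+ 2.
Proof.
have -> : c *: u + (1 - c) *: v - w = c *: (u - w) + (1 - c) *: (v - w).
  by apply/rowP => i; rewrite !mxE; ring.
have -> : u - v = (u - w) - (v - w) by apply/rowP => i; rewrite !mxE; ring.
move: (u - w) (v - w) => p q.
rewrite !enorm_sqr !dotvDl !dotvDr !dotvNl !dotvNr !dotvZl !dotvZr (dotvC q p).
ring.
Qed.

Lemma mx_norm_le_enorm u : `|u| <= enorm u.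
Proof.
rewrite [`|u|]mx_normrE; apply: bigmax_le => [|[i j] _]; first exact: enorm_ge0.
rewrite /= (ord1 i) -ler_sqr ?nnegrE ?enorm_ge0 // real_normK ?num_real //.
rewrite enorm_sqr /dotv (bigD1 j) //= -expr2.
by rewrite lerDl; apply: sumr_ge0 => k _; rewrite -expr2 sqr_ge0.
Qed.

Lemma enorm_le_mx_norm u : enorm u <= n.+1%:R * `|u|.
Proof.
rewrite -ler_sqr ?nnegrE ?enorm_ge0 ?mulr_ge0 // enorm_sqr exprMn.
apply: (@le_trans _ _ (n%:R * `|u| ^+ 2)); last first.
  apply: ler_wpM2r; first exact: sqr_ge0.
  by rewrite -natrX ler_nat (leq_trans (leqnSn n)) // -{1}(expn1 n.+1) leq_pexp2l.
have -> : n%:R * `|u| ^+ 2 = \sum_(i < n) `|u| ^+ 2.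
  by rewrite sumr_const card_ord mulr_natl.
apply: ler_sum => i _.
rewrite -expr2 -real_normK ?num_real // ler_sqr ?nnegrE // [`|u|]mx_normrE.
exact: le_bigmax (ord0, i).
Qed.

End Euclid.

Lemma real_induction (R : realType) (P : R -> Prop) :
  P 0 ->
  (forall t, 0 <= t -> t < 1 -> P t -> exists2 d, 0 < d &
     forall h, 0 < h -> h < d -> t + h <= 1 -> P (t + h)) ->
  (forall t, 0 < t -> t <= 1 -> (forall s, 0 <= s -> s < t -> P s) -> P t) ->
  P 1.
Proof.
move=> P0 Pright Pleft.
pose S := [set s : R | 0 <= s <= 1 /\ forall r, 0 <= r -> r <= s -> P r].
have S0 : S 0.
  split=> [|r r0 r0']; first by rewrite lexx ler01.
  by have -> : r = 0 by apply/eqP; rewrite eq_le r0' r0.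
have supS : has_sup S by split; [exists 0 | exists 1 => s [/andP[]]].
set s := sup S.
have s0 : 0 <= s by apply: ub_le_sup (supS.2) _ S0.
have s1 : s <= 1 by apply: ge_sup; [exists 0 | move=> r [/andP[]]].
have below r : 0 <= r -> r < s -> P r.
  move=> r0; rewrite -subr_gt0 => rs; have [q [_ Pq] rq] := sup_adherent rs supS.
  by apply: Pq r0 _; apply: ltW; rewrite -/s opprB addrCA subrr addr0 in rq.
have Ps : P s.
  have [-> //|s_neq0] := eqVneq s 0.
  by apply: Pleft => //; rewrite lt_def s_neq0 s0.
have Ss : S s.
  split=> [|r r0]; first by rewrite s0 s1.
  by rewrite le_eqVlt => /orP[/eqP rs|]; [rewrite rs | apply: below].
have [<- //|s_neq1] := eqVneq s 1.
have s_lt1 : s < 1 by rewrite lt_neqAle s_neq1 s1.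
have [d d0 Pd] := Pright s s0 s_lt1 Ps.
pose h := Num.min (d / 2) (1 - s).
have hd : h <= d / 2 by rewrite ge_min lexx.
have hs : h <= 1 - s by rewrite ge_min lexx orbT.
have h0 : 0 < h by rewrite lt_min divr_gt0 //= subr_gt0.
have Ssh : S (s + h).
  split=> [|r r0 rsh]; first by apply/andP; split; lra.
  have [rs|sr] := leP r s; first exact: Ss.2.
  by rewrite -(subrKC s r); apply: Pd; lra.
by have := ub_le_sup supS.2 Ssh; rewrite -/s; lra.
Qed.

Section MeanValueInequality.
Variable R : realType.

Definition is_deriv_on01 (k dk : R -> R) : Prop :=
  forall t, 0 <= t <= 1 -> forall eps, 0 < eps -> exists2 d, 0 < d &
    forall s, 0 <= s <= 1 -> `|s - t| < d ->
      `|k s - k t - (s - t) * dk t| <= eps * `|s - t|.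

Lemma increment_le_of_deriv (k dk : R -> R) (al be : R) :
  0 <= be -> is_deriv_on01 k dk ->
  (forall t, 0 <= t <= 1 -> dk t <= al + be * t) ->
  k 1 - k 0 <= al + be / 2.
Proof.
move=> be0 kd dk_le.
pose m s := k s - k 0 - al * s - be * s ^+ 2 / 2.
suff m1 eta : 0 < eta -> m 1 <= eta * 1.
  by apply/ler_addgt0Pr => e /m1; rewrite /m expr1n; lra.
move=> eta0; apply: (@real_induction R (fun t => m t <= eta * t)).
- by rewrite /m expr0n /= !mulr0 !mul0r !subr0 subrr.
- move=> t t0 t1 mt.
  have [d d0 kdt] := kd t (ltac:(by rewrite t0 ltW)) eta eta0.
  exists d => // h h0 hd th1.
  have := kdt (t + h); rewrite addrAC subrr add0r gtr0_norm //.
  move=> /(_ (ltac:(apply/andP; split; lra)) hd); rewrite ler_norml => /andP[_ kth].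
  have dkt : h * dk t <= h * (al + be * t) by rewrite ler_pM2l // dk_le ?t0 ?ltW.
  have : 0 <= be * h ^+ 2 by rewrite mulr_ge0 ?sqr_ge0.
  by move: mt; rewrite /m; nra.
- move=> t t0 t1 ms; apply/ler_addgt0Pr => r r0.
  have [d d0 kdt] := kd t (ltac:(by rewrite t1 ltW)) 1 ltr01.
  pose C := `|dk t| + `|al| + 1.
  have C0 : 0 < C by rewrite /C; have := normr_ge0 (dk t); have := normr_ge0 al; lra.
  pose h := Num.min t (Num.min (d / 2) (r / C)).
  have ht : h <= t by rewrite ge_min lexx.
  have hd : h <= d / 2 by rewrite !ge_min lexx orbT.
  have hC : h * C <= r by rewrite -ler_pdivlMr // !ge_min lexx !orbT.
  have h0 : 0 < h by rewrite !lt_min t0 !divr_gt0.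
  have := kdt (t - h); rewrite addrAC subrr add0r normrN gtr0_norm //.
  move=> /(_ (ltac:(apply/andP; split; lra)) (ltac:(lra))).
  rewrite mul1r ler_norml => /andP[kth _].
  have := ms (t - h) (ltac:(lra)) (ltac:(lra)); rewrite /m.
  have : (t - h) ^+ 2 <= t ^+ 2 by rewrite ler_sqr ?nnegrE; lra.
  have := ler_norm (dk t); have := ler_norm (- al); rewrite normrN.
  move: hC; rewrite /C; nra.
Qed.

End MeanValueInequality.

Section Segment.
Variables (R : realType) (n : nat) (X : set 'rV[R]_n).
Hypothesis convX : convex_in X.

Lemma convex_segment (a b : 'rV[R]_n) t :
  X a -> X b -> 0 <= t <= 1 -> X (a + t *: (b - a)).
Proof.
move=> Xa Xb /andP[t0 t1].
have -> : a + t *: (b - a) = t *: b + (1 - t) *: a.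
  by apply/rowP => i; rewrite !mxE; ring.
exact: convX.
Qed.

Lemma is_deriv_on01_segment (psi : 'rV[R]_n -> R) (G : 'rV[R]_n -> 'rV[R]_n) a b :
  (forall z, X z -> is_grad_within X psi z (G z)) -> X a -> X b ->
  is_deriv_on01 (fun s => psi (a + s *: (b - a)))
                (fun s => dotv (G (a + s *: (b - a))) (b - a)).
Proof.
move=> psiG Xa Xb t t01 eps eps0; set v := b - a.
have nv0 : 0 < enorm v + 1 by have := enorm_ge0 v; lra.
have [d d0 Hd] := psiG _ (convex_segment Xa Xb t01) (eps / (enorm v + 1)) (divr_gt0 eps0 nv0).
exists (d / (enorm v + 1)) => [|s s01]; first exact: divr_gt0.
rewrite ltr_pdivlMr // => sd.
have E : a + s *: v - (a + t *: v) = (s - t) *: v.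
  by apply/rowP => i; rewrite !mxE; ring.
have := Hd _ (convex_segment Xa Xb s01); rewrite E enormZ dotvZr.
have svd : `|s - t| * enorm v <= `|s - t| * (enorm v + 1).
  by apply: ler_wpM2l => //; lra.
move=> /(_ (le_lt_trans svd sd)) /le_trans; apply.
have : eps / (enorm v + 1) * enorm v <= eps.
  by rewrite mulrAC ler_pdivrMr // ler_pM2l //; lra.
have := normr_ge0 (s - t); move: (eps / (enorm v + 1)) => q; nra.
Qed.

Lemma grad_increment_le (psi : 'rV[R]_n -> R) (G : 'rV[R]_n -> 'rV[R]_n) a b (al be : R) :
  (forall z, X z -> is_grad_within X psi z (G z)) -> X a -> X b -> 0 <= be ->
  (forall t, 0 <= t <= 1 -> dotv (G (a + t *: (b - a))) (b - a) <= al + be * t) ->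
  psi b - psi a <= al + be / 2.
Proof.
move=> psiG Xa Xb be0 Gb.
have := increment_le_of_deriv be0 (is_deriv_on01_segment psiG Xa Xb) Gb.
by rewrite scale1r scale0r addr0 subrKC.
Qed.

End Segment.

Definition lsc_on (R : realType) (n : nat) (X : set 'rV[R]_n) (phi : 'rV[R]_n -> R) :=
  forall z, X z -> forall eta, 0 < eta -> exists2 d, 0 < d &
    forall u, X u -> enorm (u - z) < d -> phi z <= phi u + eta.

Lemma grad_lsc_on (R : realType) (n : nat) (X : set 'rV[R]_n) (psi : 'rV[R]_n -> R)
    (G : 'rV[R]_n -> 'rV[R]_n) :
  (forall z, X z -> is_grad_within X psi z (G z)) -> lsc_on X psi.
Proof.
move=> psiG z Xz eta eta0.
have [d1 d10 Hd1] := psiG z Xz 1 ltr01.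
have nG : 0 < enorm (G z) + 1 by have := enorm_ge0 (G z); lra.
exists (Num.min d1 (eta / (enorm (G z) + 1))) => [|u Xu]; first by rewrite lt_min d10 divr_gt0.
rewrite lt_min ltr_pdivlMr // => /andP[ud1 ueta].
have := Hd1 u Xu ud1; rewrite mul1r ler_norml => /andP[+ _].
have := cauchy_schwarz_norm (G z) (u - z); rewrite ler_norml => /andP[+ _].
have := enorm_ge0 (u - z); nra.
Qed.

Section GradCalculus.
Variables (R : realType) (n : nat) (X : set 'rV[R]_n).

Lemma is_grad_withinN (psi : 'rV[R]_n -> R) z g :
  is_grad_within X psi z g -> is_grad_within X (fun u => - psi u) z (- g).
Proof.
move=> psig eps eps0; have [d d0 Hd] := psig eps eps0.
exists d => // u Xu uz; rewrite dotvNl -normrN.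
have -> : - (- psi u - - psi z - - dotv g (u - z)) = psi u - psi z - dotv g (u - z).
  by ring.
exact: Hd.
Qed.

Lemma is_grad_withinB (p1 p2 : 'rV[R]_n -> R) z g1 g2 :
  is_grad_within X p1 z g1 -> is_grad_within X p2 z g2 ->
  is_grad_within X (fun u => p1 u - p2 u) z (g1 - g2).
Proof.
move=> p1g p2g eps eps0; have eps2 : 0 < eps / 2 by rewrite divr_gt0.
have [d1 d10 Hd1] := p1g _ eps2; have [d2 d20 Hd2] := p2g _ eps2.
exists (Num.min d1 d2) => [|u Xu]; first by rewrite lt_min d10 d20.
rewrite lt_min => /andP[ud1 ud2]; rewrite dotvBl.
have -> : p1 u - p2 u - (p1 z - p2 z) - (dotv g1 (u - z) - dotv g2 (u - z)) =
    (p1 u - p1 z - dotv g1 (u - z)) - (p2 u - p2 z - dotv g2 (u - z)) by ring.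
by apply: le_trans (ler_normB _ _) _; have := Hd1 u Xu ud1; have := Hd2 u Xu ud2; lra.
Qed.

End GradCalculus.

Lemma quadratic_upper_bound (R : realType) (n : nat) (X : set 'rV[R]_n)
    (psi : 'rV[R]_n -> R) (G : 'rV[R]_n -> 'rV[R]_n) (L : R) a b :
  convex_in X -> (forall z, X z -> is_grad_within X psi z (G z)) -> 0 <= L ->
  (forall z z', X z -> X z' -> enorm (G z' - G z) <= L * enorm (z' - z)) ->
  X a -> X b -> psi b <= psi a + dotv (G a) (b - a) + L / 2 * enorm (b - a) ^+ 2.
Proof.
move=> convX psiG L0 GL Xa Xb; set v := b - a.
suff : psi b - psi a <= dotv (G a) v + L * enorm v ^+ 2 / 2 by lra.
apply: (grad_increment_le convX psiG Xa Xb) => [|t /andP[t0 t1]].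
  by rewrite mulr_ge0 ?sqr_ge0.
have -> : dotv (G (a + t *: v)) v = dotv (G a) v + dotv (G (a + t *: v) - G a) v.
  by rewrite dotvBl subrKC.
rewrite lerD2l; apply: le_trans (cauchy_schwarz _ _) _.
have Xt : X (a + t *: v) by apply: convex_segment => //; rewrite t0 t1.
have := GL _ _ Xa Xt.
rewrite addrAC subrr add0r enormZ ger0_norm // => /(ler_wpM2r (enorm_ge0 v)) /le_trans.
by apply; rewrite expr2; nra.
Qed.

Section LipschitzGradient.
Variables (R : realType) (n : nat) (X : set 'rV[R]_n).
Hypothesis convX : convex_in X.
Variables (psi : 'rV[R]_n -> R) (G : 'rV[R]_n -> 'rV[R]_n) (L : R).
Hypothesis psiG : forall z, X z -> is_grad_within X psi z (G z).
Hypothesis L0 : 0 <= L.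
Hypothesis GL : forall z z', X z -> X z' -> enorm (G z' - G z) <= L * enorm (z' - z).

Lemma quadratic_lower_bound a b : X a -> X b ->
  psi a + dotv (G a) (b - a) - L / 2 * enorm (b - a) ^+ 2 <= psi b.
Proof.
move=> Xa Xb.
have NG z z' : X z -> X z' -> enorm (- G z' - - G z) <= L * enorm (z' - z).
  by move=> Xz Xz'; rewrite -opprD enormN; apply: GL.
have psiNG z : X z -> is_grad_within X (fun u => - psi u) z (- G z).
  by move=> Xz; apply/is_grad_withinN/psiG.
have := quadratic_upper_bound convX psiNG L0 NG Xa Xb.
by rewrite dotvNl; lra.
Qed.

Definition wconvex_on (phi : 'rV[R]_n -> R) (K : R) :=
  forall a b t, X a -> X b -> 0 <= t <= 1 ->
    phi (t *: a + (1 - t) *: b) <=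
    t * phi a + (1 - t) * phi b + K / 2 * (t * (1 - t)) * enorm (a - b) ^+ 2.

Lemma lipschitz_grad_wconvex : wconvex_on psi L.
Proof.
move=> a b t Xa Xb /andP[t0 t1]; set z := t *: a + (1 - t) *: b.
have Xz : X z by apply: convX.
have := quadratic_lower_bound Xz Xa; have := quadratic_lower_bound Xz Xb.
have -> : a - z = (1 - t) *: (a - b) by apply/rowP => i; rewrite !mxE; ring.
have -> : b - z = (- t) *: (a - b) by apply/rowP => i; rewrite !mxE; ring.
rewrite !dotvZr !enormZ !exprMn !real_normK ?num_real //.
set N := enorm (a - b) ^+ 2; set P := dotv (G z) (a - b) => lb la.
have t1' : 0 <= 1 - t by lra.
have := ler_wpM2l t0 la; have := ler_wpM2l t1' lb; nra.
Qed.

End LipschitzGradient.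

Lemma grad_norm_increment_le (R : realType) (n : nat) (X : set 'rV[R]_n)
    (psi : 'rV[R]_n -> R) (G : 'rV[R]_n -> 'rV[R]_n) (M : R) a b :
  convex_in X -> (forall z, X z -> is_grad_within X psi z (G z)) ->
  (forall z, X z -> enorm (G z) <= M) -> X a -> X b ->
  psi b - psi a <= M * enorm (b - a).
Proof.
move=> convX psiG GM Xa Xb.
have := grad_increment_le (al := M * enorm (b - a)) convX psiG Xa Xb (lexx 0).
rewrite mul0r addr0; apply=> t t01; rewrite mul0r addr0.
apply: le_trans (cauchy_schwarz _ _) _.
by apply: ler_wpM2r; [exact: enorm_ge0 | exact: GM (convex_segment convX Xa Xb t01)].
Qed.

Section EnormConvergence.
Variables (R : realType) (n : nat).

Lemma cvg_enorm_cauchy (u : nat -> 'rV[R]_n) :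
  (forall eps, 0 < eps -> exists N, forall j k, (N <= j)%N -> (N <= k)%N ->
     enorm (u j - u k) < eps) ->
  cvg (u @ \oo).
Proof.
move=> uC; apply: cauchy_cvg; apply/cauchyP => eps eps0.
have [N uN] := uC eps eps0; exists (u N), N => // k Nk.
by rewrite /= -ball_normE /ball_ /=; apply: le_lt_trans (mx_norm_le_enorm _) (uN _ _ _ Nk).
Qed.

Lemma cvg_enorm_lt (u : nat -> 'rV[R]_n) (l : 'rV[R]_n) : u @ \oo --> l ->
  forall d, 0 < d -> \forall k \near \oo, enorm (u k - l) < d.
Proof.
move=> /cvgrPdist_lt ul d d0; have n0 : 0 < n.+1%:R :> R by rewrite ltr0Sn.
near=> k; apply: le_lt_trans (enorm_le_mx_norm _) _.
rewrite -ltr_pdivlMl // distrC; near: k; apply: ul.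
by rewrite mulr_gt0 ?invr_gt0.
Unshelve. all: by end_near.
Qed.

End EnormConvergence.

Definition moreau_obj (R : realType) (n : nat) (phi : 'rV[R]_n -> R) (lb : R)
    (x u : 'rV[R]_n) : R :=
  phi u + lb / 2 * enorm (u - x) ^+ 2.

Section MoreauEnvelope.
Variables (R : realType) (n : nat) (X : set 'rV[R]_n) (phi : 'rV[R]_n -> R) (lb : R).

Lemma moreau_le z u K : (forall v, X v -> K <= moreau_obj phi lb z v) -> X u ->
  moreau X phi lb z <= moreau_obj phi lb z u.
Proof.
move=> Klow Xu; apply: ge_inf; last by exists u.
by exists K => _ [v Xv <-]; apply: Klow.
Qed.

Lemma moreau_ge z u K : (forall v, X v -> K <= moreau_obj phi lb z v) -> X u ->
  K <= moreau X phi lb z.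
Proof.
move=> Klow Xu; apply: lb_le_inf; first by exists (moreau_obj phi lb z u), u.
by move=> _ [v Xv <-]; apply: Klow.
Qed.

End MoreauEnvelope.

Section Prox.
Variables (R : realType) (n : nat) (X : set 'rV[R]_n).
Hypotheses (convX : convex_in X) (closedX : closed X).
Variables (phi : 'rV[R]_n -> R) (L : R).
Hypotheses (L0 : 0 < L) (phi_wconvex : wconvex_on X phi L) (phi_lsc : lsc_on X phi).
Variables (a0 g0 : 'rV[R]_n) (c0 : R).
Hypothesis phi_minor :
  forall u, X u -> c0 + dotv g0 (u - a0) - L / 2 * enorm (u - a0) ^+ 2 <= phi u.
Variable x : 'rV[R]_n.

Let F := moreau_obj phi (2 * L) x.

Lemma prox_objE u : F u = phi u + L * enorm (u - x) ^+ 2.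
Proof. by rewrite /F /moreau_obj [2 * L / 2]mulrAC divff ?mul1r ?pnatr_eq0. Qed.

Lemma prox_strongly_convex a b t : X a -> X b -> 0 <= t <= 1 ->
  F (t *: a + (1 - t) *: b) <=
  t * F a + (1 - t) * F b - L / 2 * (t * (1 - t)) * enorm (a - b) ^+ 2.
Proof.
move=> Xa Xb t01; rewrite !prox_objE.
have := phi_wconvex Xa Xb t01; have := congr1 (fun r => L * r) (enorm_convex_comb a b x t).
by rewrite /=; lra.
Qed.

Lemma prox_lsc : lsc_on X F.
Proof.
move=> z Xz eta eta0; have eta2 : 0 < eta / 2 by rewrite divr_gt0.
have [d1 d10 Hd1] := phi_lsc Xz eta2.
have C0 : 0 < 4 * L * (enorm (z - x) + 1).
  by apply: mulr_gt0; [rewrite mulr_gt0 | have := enorm_ge0 (z - x); lra].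
exists (Num.min d1 (eta / (4 * L * (enorm (z - x) + 1)))) => [|u Xu].
  by rewrite lt_min d10 divr_gt0.
rewrite lt_min ltr_pdivlMr // => /andP[uz1 uz2]; rewrite !prox_objE.
have -> : u - x = (u - z) + (z - x) by rewrite addrA subrK.
rewrite (enorm_sqrD (u - z)); have := Hd1 u Xu uz1.
have := cauchy_schwarz_norm (u - z) (z - x); rewrite ler_norml => /andP[cs _].
have := ler_wpM2l (ltW L0) cs; have := enorm_ge0 (u - z); have := enorm_ge0 (z - x).
have : 0 <= L * enorm (u - z) ^+ 2 by rewrite mulr_ge0 ?sqr_ge0 ?ltW.
have : 0 <= L * enorm (u - z) by rewrite mulr_ge0 ?enorm_ge0 ?ltW.
lra.
Qed.

Lemma prox_lbound : exists K, forall u, X u -> K <= F u.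
Proof.
set q := g0 + (2 * L) *: (a0 - x).
exists (c0 + L * enorm (a0 - x) ^+ 2 - dotv q q / (2 * L)) => u Xu.
have qu : dotv (u - a0) q = dotv g0 (u - a0) + 2 * L * dotv (u - a0) (a0 - x).
  by rewrite /q dotvDr dotvZr dotvC.
clearbody q; have L2 : 0 < 2 * L by rewrite mulr_gt0.
(* Completing the square: |L p + q|^2 >= 0. *)
have sq p : 0 <= L / 2 * enorm p ^+ 2 + dotv p q + dotv q q / (2 * L).
  rewrite -(pmulr_rge0 _ L2); apply: le_trans (dotvv_ge0 (L *: p + q)) _.
  rewrite !dotvDl !dotvDr !dotvZl !dotvZr (dotvC q) enorm_sqr.
  by rewrite le_eqVlt; apply/orP; left; apply/eqP; field; rewrite lt0r_neq0.
rewrite prox_objE; have -> : u - x = (u - a0) + (a0 - x) by rewrite addrA subrK.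
rewrite (enorm_sqrD (u - a0)); have := phi_minor Xu; have := sq (u - a0); lra.
Qed.

Lemma prox_minimizing_seq_cvg (u : nat -> 'rV[R]_n) (m : R) :
  (forall v, X v -> m <= F v) -> (forall k, X (u k) /\ F (u k) < m + k.+1%:R^-1) ->
  cvg (u @ \oo).
Proof.
move=> mF uX.
(* Strong convexity at the midpoint makes the minimising sequence Cauchy. *)
have u_cauchy j k : L * enorm (u j - u k) ^+ 2 <= 4 * (j.+1%:R^-1 + k.+1%:R^-1).
  have [[Xj Fj] [Xk Fk]] := (uX j, uX k).
  have [h0 h1] : (0 : R) <= 1 / 2 /\ 1 / 2 <= 1 :> R by split; lra.
  have := prox_strongly_convex (t := 1 / 2) Xj Xk (ltac:(by rewrite h0 h1)).
  have := mF _ (convX Xj Xk h0 h1).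
  by move: Fj Fk; move: (j.+1%:R^-1 : R) (k.+1%:R^-1 : R) => a b; lra.
apply: cvg_enorm_cauchy => eps eps0.
have q0 : 0 < L * eps ^+ 2 / 8 by rewrite divr_gt0 // mulr_gt0 // exprn_gt0.
have [N _ eN] := near_infty_natSinv_lt (PosNum q0).
exists N => j k Nj Nk; rewrite -ltr_sqr ?nnegrE ?enorm_ge0 ?(ltW eps0) // -(ltr_pM2l L0).
move: (u_cauchy j k) (eN j Nj) (eN k Nk) => /=.
by move: (j.+1%:R^-1 : R) (k.+1%:R^-1 : R) => a b; lra.
Qed.

Lemma prox_exists : X !=set0 -> exists2 xh, X xh & forall u, X u -> F xh <= F u.
Proof.
move=> [z0 Xz0]; have [K KF] := prox_lbound.
pose S := [set F u | u in X].
have infS : has_inf S by split; [exists (F z0), z0 | exists K => _ [u Xu <-]; apply: KF].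
pose m := inf S; pose e k : R := k.+1%:R^-1.
have e0 k : 0 < e k by rewrite invr_gt0 ltr0Sn.
have mF u : X u -> m <= F u by move=> Xu; apply: ge_inf; [exact: infS.2 | exists u].
have [u uX] : {u : nat -> 'rV[R]_n & forall k, X (u k) /\ F (u k) < m + e k}.
  apply: (@choice _ _ (fun k v => X v /\ F v < m + e k)) => k.
  by have [_ [v Xv <-] Fv] := inf_adherent (e0 k) infS; exists v.
have u_cvg := prox_minimizing_seq_cvg mF uX.
set l := lim (u @ \oo).
have Xl : X l by apply: (closed_cvg _ closedX) u_cvg; near=> k; exact: (uX k).1.
exists l => // v Xv; apply: le_trans (mF _ Xv); apply/ler_addgt0Pr => r r0.
have r2 : 0 < r / 2 by rewrite divr_gt0.
have [d d0 Fd] := prox_lsc Xl r2.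
have : \forall k \near \oo, enorm (u k - l) < d /\ e k < r / 2.
  near=> k; split; near: k; first exact: cvg_enorm_lt.
  exact: near_infty_natSinv_lt (PosNum r2).
move=> [N _ /(_ N (leqnn N)) [uNl eN]].
have [XuN FuN] := uX N; have := Fd _ XuN uNl; lra.
Unshelve. all: by end_near.
Qed.

Variable xh : 'rV[R]_n.
Hypotheses (Xxh : X xh) (xh_min : forall u, X u -> F xh <= F u).

Lemma prox_quadratic_growth u : X u -> F xh + L / 2 * enorm (u - xh) ^+ 2 <= F u.
Proof.
move=> Xu; set N := enorm (u - xh) ^+ 2.
have N0 : 0 <= N by rewrite sqr_ge0.
have growth t : 0 < t <= 1 -> L / 2 * (1 - t) * N <= F u - F xh.
  move=> /andP[t0 t1]; have t01 : 0 <= t <= 1 by rewrite ltW.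
  have := prox_strongly_convex Xu Xxh t01; have := xh_min (convX Xu Xxh (ltW t0) t1).
  rewrite -/N => h1 h2; rewrite -(ler_pM2l t0) -subr_ge0.
  have -> : t * (F u - F xh) - t * (L / 2 * (1 - t) * N) =
    t * F u + (1 - t) * F xh - L / 2 * (t * (1 - t)) * N - F xh by ring.
  by rewrite subr_ge0; apply: le_trans h2.
suff : L / 2 * N <= F u - F xh by lra.
apply/ler_addgt0Pr => r r0.
have C0 : 0 < L / 2 * N + 1 by rewrite ltr_wpDl // mulr_ge0 // divr_ge0 // ltW.
pose t := Num.min 1 (r / (L / 2 * N + 1)).
have t0 : 0 < t by rewrite lt_min ltr01 divr_gt0.
have t1 : t <= 1 by rewrite ge_min lexx.
have tr : t * (L / 2 * N + 1) <= r by rewrite -ler_pdivlMr // ge_min lexx orbT.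
have := growth t (ltac:(by rewrite t0 t1)); lra.
Qed.

Lemma moreau_prox : moreau X phi (2 * L) x = F xh.
Proof.
by apply/le_anti; rewrite (moreau_le xh_min Xxh) (moreau_ge xh_min Xxh).
Qed.

Lemma moreau_grad :
  is_grad_within setT (moreau X phi (2 * L)) x ((2 * L) *: (x - xh)).
Proof.
move=> eps eps0; exists (eps / L) => [|z _]; first exact: divr_gt0.
rewrite ltr_pdivlMr // => zx; set D := z - x.
(* The envelope at z is squeezed between two quadratics in D with the same
   linear part. *)
have Fz u : moreau_obj phi (2 * L) z u =
    F u - 2 * L * dotv (u - x) D + L * enorm D ^+ 2.
  rewrite prox_objE /moreau_obj [2 * L / 2]mulrAC divff ?mul1r ?pnatr_eq0 //.
  have -> : u - z = (u - x) - D by rewrite opprB addrA subrK.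
  by rewrite enorm_sqrB; ring.
have Fz_low u : X u -> F xh - 2 * L * dotv (xh - x) D - L * enorm D ^+ 2 <=
    moreau_obj phi (2 * L) z u.
  move=> Xu; rewrite Fz; have := prox_quadratic_growth Xu.
  have -> : u - x = (xh - x) + (u - xh) by rewrite [RHS]addrC addrA subrK.
  rewrite (dotvDl (xh - x)); have := cauchy_schwarz (u - xh) D.
  move: (enorm (u - xh)) (dotv (u - xh) D) => s p cs.
  have : 0 <= L / 2 * (s - 2 * enorm D) ^+ 2 by rewrite mulr_ge0 ?sqr_ge0 ?divr_ge0 ?ltW.
  have := ler_wpM2l (ltW (mulr_gt0 (ltr0Sn R 1) L0)) cs.
  lra.
have up := moreau_le Fz_low Xxh; rewrite Fz in up.
have low := moreau_ge Fz_low Xxh.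
rewrite moreau_prox dotvZl -(opprB xh x) dotvNl ler_norml.
have := enorm_ge0 D; nra.
Qed.

End Prox.

Section Minimax.
Variables (R : realType) (n m : nat) (X : set 'rV[R]_n) (Y : set 'rV[R]_m).
Variables (f : 'rV[R]_n -> 'rV[R]_m -> R) (gx : 'rV[R]_n -> 'rV[R]_m -> 'rV[R]_n).
Variables (lam mu D : R).
Hypotheses (convX : convex_in X) (closedX : closed X) (lam0 : 0 < lam).
Hypothesis f_grad : forall x y, X x -> Y y -> is_grad_within X (fun u => f u y) x (gx x y).
Hypothesis gx_lip : forall x x' y y', X x -> X x' -> Y y -> Y y' ->
  enorm (gx x' y' - gx x y) <= lam * enorm (x' - x) + mu * enorm (y' - y).
Hypothesis f_max : forall x, X x -> exists2 y, Y y & forall y', Y y' -> f x y' <= f x y.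

Lemma gx_lip_x y : Y y -> forall z z', X z -> X z' ->
  enorm (gx z' y - gx z y) <= lam * enorm (z' - z).
Proof.
by move=> Yy z z' Xz Xz'; have := gx_lip Xz Xz' Yy Yy; rewrite subrr enorm0 mulr0 addr0.
Qed.

Lemma f_quadratic_upper_bound y a b : Y y -> X a -> X b ->
  f b y <= f a y + dotv (gx a y) (b - a) + lam / 2 * enorm (b - a) ^+ 2.
Proof.
move=> Yy.
exact: (quadratic_upper_bound (G := gx^~ y) convX (fun z Xz => f_grad Xz Yy)
         (ltW lam0) (gx_lip_x Yy)).
Qed.

Lemma f_quadratic_lower_bound y a b : Y y -> X a -> X b ->
  f a y + dotv (gx a y) (b - a) - lam / 2 * enorm (b - a) ^+ 2 <= f b y.
Proof.
move=> Yy.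
exact: (quadratic_lower_bound (G := gx^~ y) convX (fun z Xz => f_grad Xz Yy)
         (ltW lam0) (gx_lip_x Yy)).
Qed.

Lemma f_wconvex y : Y y -> wconvex_on X (f^~ y) lam.
Proof.
move=> Yy.
exact: (lipschitz_grad_wconvex (G := gx^~ y) convX (fun z Xz => f_grad Xz Yy)
         (ltW lam0) (gx_lip_x Yy)).
Qed.

Lemma phimax_ge z y : X z -> Y y -> f z y <= phimax f Y z.
Proof.
move=> Xz Yy; have [ys Yys ysmax] := f_max Xz.
by apply: ub_le_sup; [exists (f z ys) => _ [y' Yy' <-]; apply: ysmax | exists y].
Qed.

Lemma phimax_eq z y : X z -> Y y -> (forall y', Y y' -> f z y' <= f z y) ->
  phimax f Y z = f z y.
Proof.
move=> Xz Yy ymax; apply/le_anti; rewrite phimax_ge // andbT.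
by apply: ge_sup; [exists (f z y), y | move=> _ [y' Yy' <-]; apply: ymax].
Qed.

Lemma phimax_wconvex : wconvex_on X (phimax f Y) lam.
Proof.
move=> a b t Xa Xb t01; have /andP[t0 t1] := t01.
have [ys Yys ysmax] := f_max (convX Xa Xb t0 t1).
rewrite (phimax_eq (convX Xa Xb t0 t1) Yys ysmax).
apply: le_trans (f_wconvex Yys Xa Xb t01) _; rewrite lerD2r.
by apply: lerD; apply: ler_wpM2l; rewrite ?subr_ge0 ?phimax_ge.
Qed.

Lemma phimax_lsc : lsc_on X (phimax f Y).
Proof.
move=> z Xz eta eta0; have [ys Yys ysmax] := f_max Xz.
have [d d0 fd] := grad_lsc_on (fun z Xz => f_grad Xz Yys) Xz eta0.
exists d => // u Xu uz; rewrite (phimax_eq Xz Yys ysmax).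
by apply: le_trans (fd u Xu uz) _; rewrite lerD2r phimax_ge.
Qed.

Lemma f_prox_exists y z : X !=set0 -> Y y -> exists2 xh, X xh & forall u, X u ->
  moreau_obj (f^~ y) (2 * lam) z xh <= moreau_obj (f^~ y) (2 * lam) z u.
Proof.
move=> [a Xa] Yy; have minor := f_quadratic_lower_bound Yy Xa.
have lsc := grad_lsc_on (fun z Xz => f_grad Xz Yy).
by apply: (prox_exists convX closedX lam0 (f_wconvex Yy) lsc minor); exists a.
Qed.

Lemma phimax_prox_exists z : X !=set0 -> exists2 xt, X xt & forall u, X u ->
  moreau_obj (phimax f Y) (2 * lam) z xt <= moreau_obj (phimax f Y) (2 * lam) z u.
Proof.
move=> [a Xa]; have [y Yy _] := f_max Xa.
have minor u : X u ->
    f a y + dotv (gx a y) (u - a) - lam / 2 * enorm (u - a) ^+ 2 <= phimax f Y u.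
  by move=> Xu; apply: le_trans (phimax_ge Xu Yy); apply: f_quadratic_lower_bound.
by apply: (prox_exists convX closedX lam0 phimax_wconvex phimax_lsc minor); exists a.
Qed.

Hypothesis mu0 : 0 <= mu.
Hypothesis diamY : forall y y', Y y -> Y y' -> enorm (y - y') <= D.

Lemma prox_f_phimax_dist_le yh z xh xt : Y yh -> X xh -> X xt ->
  (forall u, X u ->
     moreau_obj (f^~ yh) (2 * lam) z xh <= moreau_obj (f^~ yh) (2 * lam) z u) ->
  (forall u, X u ->
     moreau_obj (phimax f Y) (2 * lam) z xt <= moreau_obj (phimax f Y) (2 * lam) z u) ->
  lam * enorm (xh - xt) <= mu * D.
Proof.
move=> Yyh Xxh Xxt xh_min xt_min.
have := prox_quadratic_growth convX lam0 (f_wconvex Yyh) Xxh xh_min Xxt.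
have := prox_quadratic_growth convX lam0 phimax_wconvex Xxt xt_min Xxh.
have [ys Yys ysmax] := f_max Xxh; rewrite /moreau_obj (phimax_eq Xxh Yys ysmax).
have := phimax_ge Xxt Yys.
have gap : f xh ys - f xh yh - (f xt ys - f xt yh) <= mu * D * enorm (xh - xt).
  apply: (@grad_norm_increment_le _ _ X (fun u => f u ys - f u yh)
    (fun z => gx z ys - gx z yh) _ xt xh convX _ _ Xxt Xxh).
    by move=> u Xu; exact: is_grad_withinB (f_grad Xu Yys) (f_grad Xu Yyh).
  move=> u Xu; apply: le_trans (gx_lip Xu Xu Yyh Yys) _.
  by rewrite subrr enorm0 mulr0 add0r ler_wpM2l ?diamY.
move: gap; rewrite (enorm_distC xt xh); set d := enorm (xh - xt).
have d0 : 0 <= d := enorm_ge0 _.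
move=> gap h1 h2 h3; have : lam * d ^+ 2 <= mu * D * d by lra.
have D0 : 0 <= D := le_trans (enorm_ge0 _) (diamY Yyh Yyh).
have [-> _|d_gt0] := eqVneq d 0; first by rewrite mulr0 mulr_ge0.
by rewrite expr2 mulrA ler_pM2r // lt_def d_gt0.
Qed.

End Minimax.

Section ProjectedGradient.
Variables (R : realType) (n m : nat) (X : set 'rV[R]_n) (Y : set 'rV[R]_m).
Variables (f : 'rV[R]_n -> 'rV[R]_m -> R) (gx : 'rV[R]_n -> 'rV[R]_m -> 'rV[R]_n).
Variables (proj : 'rV[R]_n -> 'rV[R]_n) (lam mu : R) (x0 : 'rV[R]_n) (yh : 'rV[R]_m).
Hypotheses (convX : convex_in X) (lam0 : 0 < lam).
Hypothesis f_grad : forall x y, X x -> Y y -> is_grad_within X (fun u => f u y) x (gx x y).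
Hypothesis gx_lip : forall x x' y y', X x -> X x' -> Y y -> Y y' ->
  enorm (gx x' y' - gx x y) <= lam * enorm (x' - x) + mu * enorm (y' - y).
Hypotheses (projX : is_proj X proj) (Xx0 : X x0) (Yyh : Y yh).
Hypothesis f_max : forall x, X x -> exists2 y, Y y & forall y', Y y' -> f x y' <= f x y.

Let fh u := f u yh.
Let Gh z := gx z yh.

Definition stationarity_le z r := X z /\ 0 <= r /\
  forall u, X u -> 2 * lam * dotv (Gh z) (z - u) - lam ^+ 2 * enorm (z - u) ^+ 2 <= r ^+ 2.

Lemma stationarity_le_grad_norm z : X z -> stationarity_le z (enorm (Gh z)).
Proof.
move=> Xz; split; [done | split=> [|u _]]; first exact: enorm_ge0.
have := enorm_sqrB (Gh z) (lam *: (z - u)).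
rewrite dotvZr enormZ exprMn gtr0_norm // => E.
by have := sqr_ge0 (enorm (Gh z - lam *: (z - u))); rewrite E; nra.
Qed.

Lemma stationarity_le_minimizer z : X z -> (forall u, X u -> fh z <= fh u) ->
  stationarity_le z 0.
Proof.
move=> Xz zmin; split; [done | split=> [|u Xu]]; rewrite ?lexx // expr0n /=.
have := f_quadratic_upper_bound convX lam0 f_grad gx_lip Yyh Xz Xu.
rewrite -/(fh u) -/(fh z) -/(Gh z) (enorm_distC u z) -(opprB z u) dotvNr => desc.
have : dotv (Gh z) (z - u) <= lam / 2 * enorm (z - u) ^+ 2 by have := zmin u Xu; lra.
by move/(ler_wpM2l (ltW (mulr_gt0 (ltr0Sn R 1) lam0))); lra.
Qed.

Lemma prox_dist_le_stationarity z r xh : stationarity_le z r -> X xh ->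
  (forall u, X u -> moreau_obj fh (2 * lam) z xh <= moreau_obj fh (2 * lam) z u) ->
  lam * enorm (z - xh) <= r.
Proof.
move=> [Xz [r0 zr]] Xxh xh_min.
have := prox_quadratic_growth convX lam0 (f_wconvex convX lam0 f_grad gx_lip Yyh) Xxh xh_min Xz.
have := f_quadratic_lower_bound convX lam0 f_grad gx_lip Yyh Xz Xxh.
have := zr xh Xxh; rewrite /moreau_obj subrr enorm0 expr0n /= mulr0 addr0.
rewrite -/(fh z) -/(fh xh) -/(Gh z) (enorm_distC xh z) -(opprB z xh) dotvNr.
move: (enorm (z - xh)) (enorm_ge0 (z - xh)) => d d0 zr_xh lower growth.
have : lam * d ^+ 2 <= dotv (Gh z) (z - xh) by lra.
move/(ler_wpM2l (ltW (mulr_gt0 (ltr0Sn R 1) lam0))) => Pd.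
by rewrite -ler_sqr ?nnegrE ?mulr_ge0 ?(ltW lam0) //; lra.
Qed.

Lemma projected_gradient_step z : X z ->
  let p := proj (z - lam^-1 *: Gh z) in
  let e := Num.sqrt (enorm (Gh z) ^+ 2 -
                     lam^-1 ^- 2 * enorm (z - lam^-1 *: Gh z - p) ^+ 2) in
  [/\ X p, stationarity_le z e & fh p <= fh z - e ^+ 2 / (2 * lam)].
Proof.
move=> Xz p e; set g := Gh z; set xt := z - lam^-1 *: g.
have [Xp p_near] := projX xt.
have lamE : lam^-1 ^- 2 = lam ^+ 2 by rewrite exprVn invrK.
have dist_xt u : lam ^+ 2 * enorm (xt - u) ^+ 2 =
    lam ^+ 2 * enorm (z - u) ^+ 2 - 2 * lam * dotv g (z - u) + enorm g ^+ 2.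
  have -> : xt - u = (z - u) - lam^-1 *: g by rewrite /xt addrAC.
  rewrite (enorm_sqrB (z - u)) enormZ dotvZr exprMn ger0_norm ?invr_ge0 ?ltW // (dotvC _ g).
  by field; rewrite lt0r_neq0.
set I := enorm g ^+ 2 - lam^-1 ^- 2 * enorm (xt - p) ^+ 2.
have I_ge u : X u -> 2 * lam * dotv g (z - u) - lam ^+ 2 * enorm (z - u) ^+ 2 <= I.
  move=> Xu; have : enorm (xt - p) ^+ 2 <= enorm (xt - u) ^+ 2.
    by rewrite ler_sqr ?nnegrE ?enorm_ge0 ?p_near.
  rewrite /I lamE -(ler_pM2l (exprn_gt0 2 lam0)) !dist_xt; lra.
have I0 : 0 <= I by have := I_ge z Xz; rewrite subrr dotv0r enorm0 expr0n /= !mulr0 subrr.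
have eI : e ^+ 2 = I by rewrite sqr_sqrtr.
split=> //; first by split; [| split=> [|u Xu]; [exact: sqrtr_ge0 | rewrite eI I_ge]].
have := f_quadratic_upper_bound convX lam0 f_grad gx_lip Yyh Xz Xp.
rewrite -/(fh p) -/(fh z) -/g eI /I lamE dist_xt (enorm_distC p z) -(opprB z p) dotvNr.
have -> : (enorm g ^+ 2 - (lam ^+ 2 * enorm (z - p) ^+ 2 - 2 * lam * dotv g (z - p) +
    enorm g ^+ 2)) / (2 * lam) = dotv g (z - p) - lam / 2 * enorm (z - p) ^+ 2.
  by field; rewrite lt0r_neq0.
lra.
Qed.

Definition alg1_invariant (t : nat) (st : 'rV[R]_n * 'rV[R]_n * \bar R) : Prop :=
  let '(xt, xs, es) := st in
  X xt /\ exists2 r, stationarity_le xs r &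
    t%:R * r ^+ 2 <= 2 * lam * (fh x0 - fh xt) /\ (es = r%:E \/ es = +oo%E /\ t = 0%N).

Lemma alg1_state_invariant t : alg1_invariant t (alg1_state gx proj x0 yh lam^-1 t).
Proof.
elim: t => [|t IH] /=.
  split=> //; exists (enorm (Gh x0)); first exact: stationarity_le_grad_norm.
  by rewrite mul0r subrr mulr0; split=> //; right.
move: IH; case: (alg1_state gx proj x0 yh lam^-1 t) => [[xt xs] es] /= [Xt [r Sr [tr res]]].
have [Xp Se dec] := projected_gradient_step Xt.
set p := proj _ in Xp Se dec *; set e := Num.sqrt _ in Se dec *.
have e0 : 0 <= e := sqrtr_ge0 _.
have r0 : 0 <= r by case: Sr => _ [].
have e_dec : e ^+ 2 <= 2 * lam * (fh xt - fh p).
  by rewrite mulrC -ler_pdivrMr ?mulr_gt0 //; lra.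
case: ifP => [e_lt | e_nlt] /=; rewrite -natr1; split=> //.
- exists e => //; split; last by left.
  have : t%:R * e ^+ 2 <= t%:R * r ^+ 2.
    case: res => [es_r | [_ ->]]; last by rewrite !mul0r.
    move: e_lt; rewrite es_r lte_fin => /ltW er.
    by rewrite ler_wpM2l ?ler0n // ler_sqr ?nnegrE.
  lra.
- exists r => //; case: res => [es_r | [es_oo _]]; last by rewrite es_oo ltey in e_nlt.
  split; last by left.
  move: e_nlt; rewrite es_r lte_fin => /negbT; rewrite -leNgt => re.
  have : r ^+ 2 <= e ^+ 2 by rewrite ler_sqr ?nnegrE.
  lra.
Qed.

Lemma alg1_output T : exists2 r, stationarity_le (alg1 gx proj x0 yh lam^-1 T) r &
  exists2 xT, X xT & T%:R * r ^+ 2 <= 2 * lam * (fh x0 - fh xT).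
Proof.
rewrite /alg1; have := alg1_state_invariant T.
by case: alg1_state => [[xT xs] es] /= [XT [r Sr [Tr _]]]; exists r => //; exists xT.
Qed.

Lemma iteration_budget_bound eps T : 0 < eps ->
  ((300 * lam / eps ^+ 2)%:E * ((phimax f Y x0)%:E - psimin f X yh) <= T%:R%:E)%E ->
  forall u, X u -> 300 * lam * (phimax f Y x0 - fh u) <= T%:R * eps ^+ 2.
Proof.
move=> eps0 HT u Xu; have eps2 : 0 < eps ^+ 2 by rewrite exprn_gt0.
suff : (((300 * lam / eps ^+ 2) * (phimax f Y x0 - fh u))%:E <= T%:R%:E)%E.
  by rewrite lee_fin mulrAC ler_pdivrMr.
apply: le_trans HT; rewrite EFinM; apply: lee_wpmul2l.
  by rewrite lee_fin mulr_ge0 ?invr_ge0 ?ltW ?mulr_gt0.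
by rewrite EFinB leeB //; apply: ereal_inf_lbound; exists u.
Qed.

Lemma alg1_stationarity eps T : 0 < eps ->
  ((300 * lam / eps ^+ 2)%:E * ((phimax f Y x0)%:E - psimin f X yh) <= T%:R%:E)%E ->
  exists2 r, stationarity_le (alg1 gx proj x0 yh lam^-1 T) r & 150 * r ^+ 2 <= eps ^+ 2.
Proof.
move=> eps0 HT; have budget := iteration_budget_bound eps0 HT.
have fh_le : fh x0 <= phimax f Y x0 := phimax_ge f_max Xx0 Yyh.
have lam300 : 0 < 300 * lam by rewrite mulr_gt0.
case: T HT budget => [|T] _ budget.
  (* With no iteration the budget makes x0 a minimiser of f(., yh) on X. *)
  exists 0; last by rewrite expr0n /= mulr0 sqr_ge0.
  apply: stationarity_le_minimizer Xx0 _ => u Xu.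
  by have := budget u Xu; rewrite mul0r pmulr_rle0 // subr_le0; lra.
have [r Sr [xT XT Tr]] := alg1_output T.+1; exists r => //.
have := budget xT XT; have := ler_wpM2l (ltW lam0) fh_le.
by move=> ? ?; rewrite -(ler_pM2l (ltr0Sn R T)); lra.
Qed.

End ProjectedGradient.

Theorem theorem2 (R : realType) (n m : nat)
  (X : set 'rV[R]_n) (Y : set 'rV[R]_m) (D : R)
  (f : 'rV[R]_n -> 'rV[R]_m -> R) (gx : 'rV[R]_n -> 'rV[R]_m -> 'rV[R]_n)
  (proj : 'rV[R]_n -> 'rV[R]_n) (lam mu eps : R)
  (x0 : 'rV[R]_n) (yh : 'rV[R]_m) (T : nat) :
  (* standing assumptions *)
  convex_in X -> interior X !=set0 -> closed X ->
  convex_in Y -> interior Y !=set0 -> compact Y ->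
  (forall y y', Y y -> Y y' -> enorm (y - y') <= D) ->
  (* phi(x) = max_{y in Y} f(x,y) is attained *)
  (forall x, X x -> exists2 y, Y y & forall y', Y y' -> f x y' <= f x y) ->
  (* (A1) *)
  0 < lam -> 0 <= mu ->
  (forall x y, X x -> Y y -> is_grad_within X (fun u => f u y) x (gx x y)) ->
  (forall x x' y y', X x -> X x' -> Y y -> Y y' ->
     enorm (gx x' y' - gx x y) <= lam * enorm (x' - x) + mu * enorm (y' - y)) ->
  (* Pi_X *)
  is_proj X proj ->
  (* algorithm input *)
  X x0 -> Y yh -> 0 < eps ->
  ((300 * lam / eps ^+ 2)%:E * ((phimax f Y x0)%:E - psimin f X yh) <= (T%:R)%:E)%E ->
  let xs := alg1 gx proj x0 yh lam^-1 T in
  (exists2 g, is_grad_within setT (moreau X (fun x => f x yh) (2 * lam)) xs g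
            & enorm g <= eps / 6) /\
  (24 * mu * D <= eps ->
   exists2 g, is_grad_within setT (moreau X (phimax f Y) (2 * lam)) xs g
            & enorm g <= eps).
Proof.
move=> convX _ closedX _ _ _ diamY f_max lam0 mu0 f_grad gx_lip projX Xx0 Yyh eps0 HT xs.
have [r Sr r_small] := alg1_stationarity convX lam0 f_grad gx_lip projX Xx0 Yyh f_max eps0 HT.
have Xne : X !=set0 by exists x0.
have [xh Xxh xh_min] := f_prox_exists convX closedX lam0 f_grad gx_lip xs Xne Yyh.
have [xt Xxt xt_min] := phimax_prox_exists convX closedX lam0 f_grad gx_lip f_max xs Xne.
have xs_xh := prox_dist_le_stationarity convX lam0 f_grad gx_lip Yyh Sr Xxh xh_min.
have xh_xt := prox_f_phimax_dist_le convX lam0 f_grad gx_lip f_max mu0 diamY Yyh Xxh Xxt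
  xh_min xt_min.
have r0 : 0 <= r by case: Sr => _ [].
have r_eps : 2 * r <= eps / 6.
  rewrite -ler_sqr ?nnegrE ?mulr_ge0 ?divr_ge0 ?(ltW eps0) //.
  by have := sqr_ge0 eps; lra.
have grad_norm z : enorm ((2 * lam) *: (xs - z)) = 2 * lam * enorm (xs - z).
  by rewrite enormZ ger0_norm // mulr_ge0 // ltW.
split.
  exists ((2 * lam) *: (xs - xh)).
    exact (moreau_grad convX lam0 (f_wconvex convX lam0 f_grad gx_lip Yyh) Xxh xh_min).
  by rewrite grad_norm; lra.
move=> muD; exists ((2 * lam) *: (xs - xt)).
  exact (moreau_grad convX lam0 (phimax_wconvex convX lam0 f_grad gx_lip f_max) Xxt xt_min).
have := ler_enormD (xs - xh) (xh - xt); rewrite addrA subrK grad_norm => tri.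
have := ler_wpM2l (ltW lam0) tri; lra.
Qed.
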